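(* Let $f:\mathbb{R}^2\to\mathbb{R}^2$ be a homeomorphism and let $x\in\mathbb{R}^2$ satisfy $\omega(x)=\emptyset$. Then there exists a continuous positive map $\epsilon:\mathbb{R}^2\to\mathbb{R}$ such that for every $y\neq x$ there exists $n>0$ with $\|f^n(x)-f^n(y)\|>\epsilon(f^n(x))$. In particular, if $(x_n)_{n\in\mathbb{Z}}$ is a pseudo-orbit with $x_n=f^n(x)$ for all $n\geq n_0$ (some $n_0$), then the only orbit that can $\epsilon$-shadow $(x_n)_{n\in\mathbb{Z}}$ is the orbit of $x$.
   Context: $\omega(x)$ is the $\omega$-limit set of $x$ under $f$. For a continuous positive $\delta$, a $\delta$-pseudo-orbit is a sequence $(x_n)_{n\in\mathbb{Z}}$ with $\|f(x_n)-x_{n+1}\|<\delta(f(x_n))$ for all $n$; it is $\epsilon$-shadowed by the orbit of a point $w$ if $\|x_n-f^n(w)\|<\epsilon(x_n)$ for all $n\in\mathbb{Z}$. *)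

From Stdlib Require Import Reals ZArith.
Open Scope R_scope.

Definition R2 : Type := (R * R)%type.

Definition norm2 (p : R2) : R := sqrt (fst p ^ 2 + snd p ^ 2).
Definition sub2 (p q : R2) : R2 := (fst p - fst q, snd p - snd q).

Definition cont2 (f : R2 -> R2) : Prop :=
  forall p e, 0 < e -> exists d, 0 < d /\
    forall q, norm2 (sub2 q p) < d -> norm2 (sub2 (f q) (f p)) < e.

Definition cont2R (h : R2 -> R) : Prop :=
  forall p e, 0 < e -> exists d, 0 < d /\
    forall q, norm2 (sub2 q p) < d -> Rabs (h q - h p) < e.

Definition cont_pos (h : R2 -> R) : Prop := cont2R h /\ forall p, 0 < h p.

Definition homeomorphism (f : R2 -> R2) : Prop :=
  cont2 f /\ exists g : R2 -> R2, cont2 g /\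
    (forall p, g (f p) = p) /\ (forall p, f (g p) = p).

Definition iterf (f : R2 -> R2) (n : nat) (x : R2) : R2 := Nat.iter n f x.

Definition omega_limit (f : R2 -> R2) (x : R2) : R2 -> Prop :=
  fun z => forall e, 0 < e -> forall N : nat, exists n : nat,
    (N <= n)%nat /\ norm2 (sub2 (iterf f n x) z) < e.

(* the bi-infinite orbit of w: o n = f^n(w) for all n in Z
   (for a bijection f this determines o uniquely) *)
Definition is_orbit (f : R2 -> R2) (w : R2) (o : Z -> R2) : Prop :=
  o 0%Z = w /\ forall n : Z, o (n + 1)%Z = f (o n).

Definition pseudo_orbit (f : R2 -> R2) (delta : R2 -> R) (xs : Z -> R2) : Prop :=
  forall n : Z, norm2 (sub2 (f (xs n)) (xs (n + 1)%Z)) < delta (f (xs n)).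

Definition shadowed (f : R2 -> R2) (eps : R2 -> R) (xs : Z -> R2) (w : R2) : Prop :=
  exists o, is_orbit f w o /\
    forall n : Z, norm2 (sub2 (xs n) (o n)) < eps (xs n).

From Stdlib Require Import Reals ZArith Lra Lia Rgeom Classical IndefiniteDescription.
From Coquelicot Require Import Coquelicot.
Open Scope R_scope.

(* Let [g] be the inverse of [f] and [p n = f^n x].  Continuity of [g^n] gives radii
   [c n > 0] such that every point [c n]-close to [p n] is pulled back by [g^n] to within
   [1/(n+1)] of [x].  Take for [eps] the lower envelope [q |-> inf_n (c n + |q - p n|)]:
   it is 1-Lipschitz and [eps (p n) <= c n].  It is positive because [omega(x)] is empty,
   so the orbit of [x] eventually leaves every ball and only finitely many of the cones
   come near a given point.  If the orbit of [y] stays [eps]-close to that of [x] from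
   some time on, then [y = g^n (f^n y)] is [1/(n+1)]-close to [x] for all large [n],
   so [y = x]; an orbit shadowing a pseudo-orbit that ends as the orbit of [x] does so. *)

Lemma norm2_ge0 p : 0 <= norm2 p.
Proof. apply sqrt_pos. Qed.

Lemma norm2_sub_sym p q : norm2 (sub2 p q) = norm2 (sub2 q p).
Proof. unfold norm2, sub2; simpl; f_equal; ring. Qed.

Lemma norm2_sub_diag p : norm2 (sub2 p p) = 0.
Proof.
  unfold norm2, sub2; simpl.
  replace ((fst p - fst p) * ((fst p - fst p) * 1) + (snd p - snd p) * ((snd p - snd p) * 1))
    with 0 by ring.
  apply sqrt_0.
Qed.

Lemma norm2_sub_triangle p q r : norm2 (sub2 p r) <= norm2 (sub2 p q) + norm2 (sub2 q r).
Proof.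
  assert (E : forall a b, norm2 (sub2 a b) = dist_euc (fst a) (snd a) (fst b) (snd b)).
  { intros a b; unfold norm2, sub2, dist_euc, Rsqr; simpl; f_equal; ring. }
  rewrite !E; apply triangle.
Qed.

Lemma norm2_sub_eq0 p q : norm2 (sub2 p q) = 0 -> p = q.
Proof.
  destruct p as [a b], q as [c d]; unfold norm2, sub2; simpl; intro H.
  pose proof (Rle_0_sqr (a - c)); pose proof (Rle_0_sqr (b - d)); unfold Rsqr in *.
  apply sqrt_eq_0 in H; [|nra].
  f_equal; nra.
Qed.

Lemma Rabs_fst_le_norm2 p : Rabs (fst p) <= norm2 p.
Proof. unfold norm2; rewrite <- sqrt_Rsqr_abs; apply sqrt_le_1_alt; unfold Rsqr; nra. Qed.

Lemma Rabs_snd_le_norm2 p : Rabs (snd p) <= norm2 p.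
Proof. unfold norm2; rewrite <- sqrt_Rsqr_abs; apply sqrt_le_1_alt; unfold Rsqr; nra. Qed.

Lemma norm2_le_Rabs_sum p : norm2 p <= Rabs (fst p) + Rabs (snd p).
Proof.
  pose proof (Rabs_pos (fst p)); pose proof (Rabs_pos (snd p)).
  unfold norm2; rewrite <- (sqrt_Rsqr (Rabs (fst p) + Rabs (snd p))) by lra.
  apply sqrt_le_1_alt; rewrite <- (pow2_abs (fst p)), <- (pow2_abs (snd p)).
  unfold Rsqr; nra.
Qed.

Definition cluster_point (u : nat -> R2) (z : R2) : Prop :=
  forall e, 0 < e -> forall N : nat, exists n : nat,
    (N <= n)%nat /\ norm2 (sub2 (u n) z) < e.

Lemma not_cluster_point_separated u z : ~ cluster_point u z ->
  exists e, 0 < e /\ exists N : nat, forall n, (N <= n)%nat -> e <= norm2 (sub2 (u n) z).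
Proof.
  intro Hz; apply NNPP; intro Hsep; apply Hz; intros e He N.
  apply NNPP; intro Hfar; apply Hsep.
  exists e; split; [exact He|]; exists N; intros n Hn.
  apply Rnot_lt_le; intro Hlt; apply Hfar; eauto.
Qed.

(* Each point of the square around [q] has a neighbourhood avoided by a tail of [u];
   compactness of the square makes the neighbourhood size and the tail uniform. *)
Lemma no_cluster_point_escapes (u : nat -> R2) :
  (forall z, ~ cluster_point u z) ->
  forall q r, exists N : nat, forall n, (N <= n)%nat -> r <= norm2 (sub2 q (u n)).
Proof.
  intros Hu q r; apply NNPP; intro Hstay.
  assert (Hnear : forall M, exists n, (M <= n)%nat /\ norm2 (sub2 q (u n)) < r).
  { intro M; apply NNPP; intro H; apply Hstay; exists M; intros n Hn.
    apply Rnot_lt_le; intro Hlt; apply H; eauto. }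
  destruct (functional_choice (fun z eN => 0 < fst eN /\ forall n, (snd eN <= n)%nat ->
              fst eN <= norm2 (sub2 (u n) z))) as [sep Hsep].
  { intro z; destruct (not_cluster_point_separated u z (Hu z)) as (e & He & N & HN).
    exists (e, N); auto. }
  assert (Hdelta : forall a b, 0 < Rmin (fst (sep (a, b)) / 2) (/ (INR (snd (sep (a, b))) + 1))).
  { intros a b; pose proof (proj1 (Hsep (a, b))); pose proof (pos_INR (snd (sep (a, b)))).
    apply Rmin_pos; [lra|apply Rinv_0_lt_compat; lra]. }
  destruct (compactness_value_2d (fst q - r) (fst q + r) (snd q - r) (snd q + r)
              (fun a b => mkposreal _ (Hdelta a b))) as [d Hd].
  destruct (archimed_cor1 d (cond_pos d)) as (M & HM & HM0).
  destruct (Hnear M) as (n & Hn & Hqn).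
  pose proof (Rle_lt_trans _ _ _ (Rabs_fst_le_norm2 (sub2 q (u n))) Hqn) as Hfst.
  pose proof (Rle_lt_trans _ _ _ (Rabs_snd_le_norm2 (sub2 q (u n))) Hqn) as Hsnd.
  simpl in Hfst, Hsnd; apply Rabs_def2 in Hfst; apply Rabs_def2 in Hsnd.
  apply (Hd (fst (u n)) (snd (u n))); [lra|lra|].
  intros (a & b & _ & _ & Ha & Hb & Hdab); simpl in Ha, Hb, Hdab.
  destruct (Hsep (a, b)) as [HE HNN].
  pose proof (Rmin_l (fst (sep (a, b)) / 2) (/ (INR (snd (sep (a, b))) + 1))) as HminE.
  pose proof (Rmin_r (fst (sep (a, b)) / 2) (/ (INR (snd (sep (a, b))) + 1))) as HminN.
  assert (HlateN : (snd (sep (a, b)) < M)%nat).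
  { apply INR_lt; pose proof (pos_INR (snd (sep (a, b)))); pose proof (cond_pos d).
    assert (INR (snd (sep (a, b))) + 1 <= / d).
    { rewrite <- (Rinv_inv (INR (snd (sep (a, b))) + 1)); apply Rinv_le_contravar; lra. }
    assert (/ d < INR M).
    { rewrite <- (Rinv_inv (INR M)); apply Rinv_lt_contravar; [|exact HM].
      apply Rmult_lt_0_compat; [apply Rinv_0_lt_compat, lt_0_INR|]; lia || lra. }
    lra. }
  pose proof (HNN n ltac:(lia)) as Hfar.
  pose proof (norm2_le_Rabs_sum (sub2 (u n) (a, b))) as Hsum; simpl in Hsum.
  lra.
Qed.

Lemma nonneg_seq_glb (a : nat -> R) : (forall n, 0 <= a n) ->
  {m : R | (forall n, m <= a n) /\ forall L, (forall n, L <= a n) -> L <= m}.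
Proof.
  intro Ha.
  assert (Hbound : bound (fun r => exists n, r = - a n)).
  { exists 0; intros r [n ->]; specialize (Ha n); lra. }
  destruct (completeness _ Hbound (ex_intro _ (- a 0%nat) (ex_intro _ 0%nat eq_refl)))
    as [s [Hub Hleast]].
  exists (- s); split.
  - intro n; assert (- a n <= s) by (apply Hub; eauto); lra.
  - intros L HL; assert (s <= - L); [|lra].
    apply Hleast; intros r [n ->]; specialize (HL n); lra.
Qed.

Lemma finite_min_pos (c : nat -> R) (N : nat) : (forall n, 0 < c n) ->
  exists m, 0 < m /\ forall n, (n < N)%nat -> m <= c n.
Proof.
  intro Hc; induction N as [|N [m [Hm HmN]]].
  - exists 1; split; [lra|]; intros n Hn; lia.
  - exists (Rmin m (c N)); split; [apply Rmin_pos; auto|].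
    intros n Hn; destruct (Nat.eq_dec n N) as [->|Hne]; [apply Rmin_r|].
    eapply Rle_trans; [apply Rmin_l|]; apply HmN; lia.
Qed.

Section ConeInfimum.

Variables (p : nat -> R2) (c : nat -> R).
Hypothesis c_pos : forall n, 0 < c n.

Lemma cone_nonneg q n : 0 <= c n + norm2 (sub2 q (p n)).
Proof. pose proof (c_pos n); pose proof (norm2_ge0 (sub2 q (p n))); lra. Qed.

Definition cone_inf (q : R2) : R :=
  proj1_sig (nonneg_seq_glb (fun n => c n + norm2 (sub2 q (p n))) (cone_nonneg q)).

Lemma cone_inf_le q n : cone_inf q <= c n + norm2 (sub2 q (p n)).
Proof. exact (proj1 (proj2_sig (nonneg_seq_glb _ (cone_nonneg q))) n). Qed.

Lemma cone_inf_greatest q L :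
  (forall n, L <= c n + norm2 (sub2 q (p n))) -> L <= cone_inf q.
Proof. exact (proj2 (proj2_sig (nonneg_seq_glb _ (cone_nonneg q))) L). Qed.

Lemma cone_inf_lipschitz q q' : cone_inf q' - norm2 (sub2 q q') <= cone_inf q.
Proof.
  apply cone_inf_greatest; intro n.
  pose proof (cone_inf_le q' n); pose proof (norm2_sub_triangle q' q (p n)).
  rewrite (norm2_sub_sym q' q) in *; lra.
Qed.

Lemma cone_inf_cont : cont2R cone_inf.
Proof.
  intros q e He; exists e; split; [exact He|]; intros q' Hq'.
  pose proof (cone_inf_lipschitz q q'); pose proof (cone_inf_lipschitz q' q).
  rewrite (norm2_sub_sym q q') in *; apply Rabs_def1; lra.
Qed.

Hypothesis p_escapes :
  forall q, exists N : nat, forall n, (N <= n)%nat -> 1 <= norm2 (sub2 q (p n)).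

Lemma cone_inf_pos q : 0 < cone_inf q.
Proof.
  destruct (p_escapes q) as [N HN]; destruct (finite_min_pos c N c_pos) as (m & Hm & HmN).
  apply Rlt_le_trans with (Rmin m 1); [apply Rmin_pos; lra|].
  apply cone_inf_greatest; intro n.
  pose proof (c_pos n); pose proof (norm2_ge0 (sub2 q (p n))).
  destruct (le_lt_dec N n) as [Hle|Hlt].
  - pose proof (HN n Hle); pose proof (Rmin_r m 1); lra.
  - pose proof (HmN n Hlt); pose proof (Rmin_l m 1); lra.
Qed.

Lemma exists_cont_pos_below : exists eps, cont_pos eps /\ forall n, eps (p n) <= c n.
Proof.
  exists cone_inf; split; [split; [exact cone_inf_cont|exact cone_inf_pos]|].
  intro n; pose proof (cone_inf_le (p n) n) as H; rewrite norm2_sub_diag in H; lra.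
Qed.

End ConeInfimum.

Lemma cont2_iter g n : cont2 g -> cont2 (Nat.iter n g).
Proof.
  intro Hg; induction n as [|n IH]; intros q e He.
  - exists e; split; [exact He|]; intros q' Hq'; exact Hq'.
  - destruct (Hg (Nat.iter n g q) e He) as (d1 & Hd1 & H1).
    destruct (IH q d1 Hd1) as (d2 & Hd2 & H2).
    exists d2; split; [exact Hd2|]; intros q' Hq'; apply H1, H2, Hq'.
Qed.

Lemma iter_cancel (f g : R2 -> R2) : (forall q, g (f q) = q) ->
  forall n q, Nat.iter n g (iterf f n q) = q.
Proof.
  intros Hgf n; induction n as [|n IH]; intro q; [reflexivity|].
  unfold iterf in *; rewrite (Nat.iter_succ_r n _ f q); simpl; rewrite IH; apply Hgf.
Qed.

Lemma orbit_of_nat f w o : is_orbit f w o -> forall k, o (Z.of_nat k) = iterf f k w.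
Proof.
  intros [H0 HS] k; induction k as [|k IH]; [exact H0|].
  rewrite Nat2Z.inj_succ; unfold Z.succ; rewrite HS, IH; reflexivity.
Qed.

Section InverseIterates.

Variables (f g : R2 -> R2) (x : R2).
Hypothesis g_cont : cont2 g.
Hypothesis g_f : forall q, g (f q) = q.

Definition pullback_radius (n : nat) (c : R) : Prop :=
  0 < c /\ forall q, norm2 (sub2 q (iterf f n x)) <= c ->
    norm2 (sub2 (Nat.iter n g q) x) < / (INR n + 1).

Lemma exists_pullback_radii : exists c : nat -> R, forall n, pullback_radius n (c n).
Proof.
  apply functional_choice; intro n.
  assert (He : 0 < / (INR n + 1)) by (apply Rinv_0_lt_compat; pose proof (pos_INR n); lra).
  destruct (cont2_iter g n g_cont (iterf f n x) _ He) as (d & Hd & Hnear).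
  exists (d / 2); split; [lra|]; intros q Hq.
  rewrite <- (iter_cancel f g g_f n x); apply Hnear; lra.
Qed.

Lemma eq_of_eventually_within_radii (c : nat -> R) (y : R2) (k : nat) :
  (forall n, pullback_radius n (c n)) ->
  (forall n, (k <= n)%nat -> norm2 (sub2 (iterf f n y) (iterf f n x)) <= c n) ->
  y = x.
Proof.
  intros Hc Hy; apply norm2_sub_eq0.
  pose proof (norm2_ge0 (sub2 y x)) as Hge.
  destruct (Req_dec (norm2 (sub2 y x)) 0) as [Hz|Hnz]; [exact Hz|exfalso].
  destruct (archimed_cor1 (norm2 (sub2 y x))) as (N & HN & HN0); [lra|].
  pose proof (proj2 (Hc (N + k)%nat) _ (Hy (N + k)%nat ltac:(lia))) as Hclose.
  rewrite (iter_cancel f g g_f) in Hclose.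
  assert (/ (INR (N + k) + 1) <= / INR N).
  { apply Rinv_le_contravar; [apply lt_0_INR; lia|].
    rewrite plus_INR; pose proof (pos_INR k); lra. }
  lra.
Qed.

End InverseIterates.

Theorem mainTheorem9 (f : R2 -> R2) (x : R2) :
  homeomorphism f ->
  (forall z, ~ omega_limit f x z) ->
  exists eps : R2 -> R, cont_pos eps /\
    (forall y, y <> x -> exists n : nat, (0 < n)%nat /\
        norm2 (sub2 (iterf f n x) (iterf f n y)) > eps (iterf f n x)) /\
    (forall (delta : R2 -> R) (xs : Z -> R2) (n0 : Z) (ox : Z -> R2) (w : R2),
        cont_pos delta ->
        pseudo_orbit f delta xs ->
        is_orbit f x ox ->
        (forall n : Z, (n0 <= n)%Z -> xs n = ox n) ->
        shadowed f eps xs w ->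
        w = x).
Proof.
  intros [_ [g [g_cont [g_f _]]]] Hno.
  destruct (exists_pullback_radii f g x g_cont g_f) as [c Hc].
  destruct (exists_cont_pos_below (fun n => iterf f n x) c (fun n => proj1 (Hc n))
              (fun q => no_cluster_point_escapes _ Hno q 1)) as (eps & Heps & Hbelow).
  assert (Htrack : forall y k, (forall n, (k <= n)%nat ->
            norm2 (sub2 (iterf f n x) (iterf f n y)) <= eps (iterf f n x)) -> y = x).
  { intros y k Hy; apply (eq_of_eventually_within_radii f g x g_f c y k Hc).
    intros n Hn; rewrite norm2_sub_sym; eapply Rle_trans; [apply Hy, Hn|apply Hbelow]. }
  exists eps; split; [exact Heps|split].
  - intros y Hy; apply NNPP; intro Hshadow; apply Hy, (Htrack y 1%nat).
    intros n Hn; apply Rnot_lt_le; intro Hfar; apply Hshadow; exists n; split; [lia|exact Hfar].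
  - intros delta xs n0 ox w _ _ Hox Hxs [o [Ho Hsh]]; apply (Htrack w (Z.to_nat n0)).
    intros n Hn; pose proof (Hsh (Z.of_nat n)) as Hn'.
    rewrite Hxs, (orbit_of_nat f x ox Hox), (orbit_of_nat f w o Ho) in Hn' by lia.
    lra.
Qed.
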